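(* Let $k\ge1$, $-\frac{\pi}{2}\le\theta_1<\theta_2<\dots<\theta_{k+1}\le\frac{\pi}{2}$ and $\theta_{\min}=\min_{p\ne j}|\theta_p-\theta_j|$. Then for any $\hat\theta_1,\dots,\hat\theta_k\in\mathbb R$, $$\|\eta_{k+1,k}(e^{i\theta_1},\dots,e^{i\theta_{k+1}},e^{i\hat\theta_1},\dots,e^{i\hat\theta_k})\|_\infty\ge\xi(k)\Big(\frac{2\theta_{\min}}{\pi}\Big)^k.$$
   Context: For $z_1,\dots,z_p,\hat z_1,\dots,\hat z_q\in\mathbb C$, $\eta_{p,q}(z_1,\dots,z_p,\hat z_1,\dots,\hat z_q)\in\mathbb R^p$ is the vector whose $j$-th entry is $\prod_{l=1}^q|z_j-\hat z_l|$. For an integer $k\ge1$: $\xi(1)=\frac12$; $\xi(k)=\frac{(\frac{k-1}{2})!(\frac{k-3}{2})!}{4}$ if $k\ge3$ is odd; $\xi(k)=\frac{((\frac{k-2}{2})!)^2}{4}$ if $k$ is even. *)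

From Stdlib Require Import Reals Lra Lia Arith List.
Open Scope R_scope.

Definition C := (R * R)%type.
Definition Csub (z w : C) : C := (fst z - fst w, snd z - snd w).
Definition Cmod (z : C) : R := sqrt (fst z ^ 2 + snd z ^ 2).
Definition expi (t : R) : C := (cos t, sin t).

Fixpoint prodR (f : nat -> R) (n : nat) : R :=
  match n with
  | O => 1
  | S m => prodR f m * f (S m)
  end.

(* eta_{p,q}(z_1..z_p, zh_1..zh_q) : entry j (1 <= j <= p) is
   prod_{l=1}^q |z_j - zh_l|.  Sequences are indexed from 1. *)
Definition eta (p q : nat) (z zh : nat -> C) (j : nat) : R :=
  prodR (fun l => Cmod (Csub (z j) (zh l))) q.

Definition norm_inf (p : nat) (v : nat -> R) : R :=
  fold_right Rmax 0 (map (fun j => Rabs (v j)) (seq 1 p)).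

Definition xi (k : nat) : R :=
  if Nat.eqb k 1 then 1 / 2
  else if Nat.even k then
    (INR (fact ((k - 2) / 2)))^2 / 4
  else
    INR (fact ((k - 1) / 2)) * INR (fact ((k - 3) / 2)) / 4.

(** The points [z_j = e^{i theta_j}] are separated: [|z_p - z_j| >= d |p - j|] with [d = 2 theta_min / pi],
    by Jordan's inequality applied to the chord length [2 sin((theta_j - theta_p)/2)].
    The polynomial [P(z) = prod_l (z - e^{i theta_hat_l})] is monic of degree [k], so its
    divided difference on the [k+1] nodes [z_j] is [1]:
    [1 = sum_j P(z_j) / prod_{p <> j} (z_j - z_p)].  Bounding [|P(z_j)|] by the sup norm [M]
    and each denominator from below by [d^k (j-1)! (k+1-j)!] gives [1 <= M 2^k / (d^k k!)],
    and [xi(k) 2^k <= k!]. *)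
From Stdlib Require Import Reals Lra Lia Arith List Psatz.
From Coquelicot Require Complex.
Open Scope R_scope.

Lemma jordan_sin_ge x : 0 <= x <= PI / 2 -> 2 * x / PI <= sin x.
Proof.
  intros [H0 H1].
  pose proof PI_4 as Hp4. pose proof PI2_3_2 as Hp32.
  assert (Hk : 2 * x / PI = x * (2 / PI)) by (field; lra).
  assert (Hq : 2 / PI <= 2 / 3).
  { unfold Rdiv. apply Rmult_le_compat_l; [lra|]. apply Rinv_le_contravar; lra. }
  assert (Hq0 : 0 < 2 / PI) by (apply Rdiv_lt_0_compat; lra).
  rewrite Hk.
  (* Taylor lower bounds: for sin near 0, and for sin x = cos (PI/2 - x) near PI/2. *)
  destruct (Rle_dec x (14/10)) as [Hx|Hx].
  - destruct (SIN x H0 ltac:(lra)) as [H _].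
    assert (E : sin_lb x = x - x^3/6 + x^5/120 - x^7/5040).
    { unfold sin_lb, sin_approx, sin_term; simpl; field. }
    rewrite E in H.
    apply Rle_trans with (2 := H).
    assert (x^2 <= 196/100) by nra.
    assert (0 <= x^5) by (apply pow_le; lra).
    assert (x^7 <= 42 * x^5).
    { replace (x^7) with (x^2 * x^5) by ring. nra. }
    nra.
  - set (y := PI / 2 - x).
    assert (Hy : 0 <= y <= 6/10) by (unfold y; lra).
    replace x with (PI / 2 - y) by (unfold y; lra).
    rewrite sin_shift.
    destruct (COS y ltac:(lra) ltac:(lra)) as [H _].
    assert (E : cos_lb y = 1 - y^2/2 + y^4/24 - y^6/720).
    { unfold cos_lb, cos_approx, cos_term; simpl; field. }
    rewrite E in H.
    apply Rle_trans with (2 := H).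
    assert (0 <= y^4) by (apply pow_le; lra).
    assert (y^6 <= y^4).
    { replace (y^6) with (y^2 * y^4) by ring. assert (y^2 <= 1) by nra. nra. }
    replace ((PI / 2 - y) * (2 / PI)) with (1 - y * (2 / PI)) by (field; lra).
    assert (Hq2 : 1 / 2 <= 2 / PI).
    { apply Rmult_le_reg_r with PI; [lra|].
      replace (2 / PI * PI) with 2 by (field; lra). lra. }
    nra.
Qed.

Lemma expi_chord_ge a b :
  0 <= b - a <= PI -> 2 * (b - a) / PI <= Cmod (Csub (expi b) (expi a)).
Proof.
  intros H.
  unfold Cmod, Csub, expi; simpl.
  set (h := (b - a) / 2).
  assert (E : (cos b - cos a) * ((cos b - cos a) * 1) + (sin b - sin a) * ((sin b - sin a) * 1)
              = (2 * sin h) ^ 2).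
  { pose proof (cos_minus b a) as E1.
    pose proof (cos_2a_sin h) as E2.
    replace (2 * h) with (b - a) in E2 by (unfold h; field).
    pose proof (sin2_cos2 a) as Ha. pose proof (sin2_cos2 b) as Hb.
    unfold Rsqr in Ha, Hb. nra. }
  rewrite E.
  assert (Hh : 0 <= h <= PI / 2) by (unfold h; lra).
  pose proof (jordan_sin_ge h Hh).
  assert (0 <= sin h) by (apply sin_ge_0; lra).
  rewrite sqrt_pow2 by lra.
  replace (2 * (b - a) / PI) with (2 * (2 * h / PI)) by (unfold h; field; pose proof PI_RGT_0; lra).
  lra.
Qed.

Module Lagrange.
Import Complex.
Local Open Scope C_scope.

Definition node_prod (x : C) (ys : list C) : C :=
  fold_right (fun y acc => (x - y) * acc) 1 ys.

(* Unfolds to [sum_j f x_j / prod_{i <> j} (x_j - x_i)], the divided difference of [f]. *)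
Fixpoint lagrange_sum (xs : list C) (f : C -> C) : C :=
  match xs with
  | nil => 0
  | x :: rest => f x / node_prod x rest + lagrange_sum rest (fun y => f y / (y - x))
  end.

Fixpoint Cprod (f : nat -> C) (n : nat) : C :=
  match n with O => 1 | S m => Cprod f m * f (S m) end.

Lemma Csub_neq0 (x y : C) : x <> y -> x - y <> 0.
Proof. intros H E. apply H. replace x with ((x - y) + y) by ring. rewrite E. ring. Qed.

Lemma Cmult_neq0 (a b : C) : a <> 0 -> b <> 0 -> a * b <> 0.
Proof.
  intros Ha Hb E. apply Hb. replace b with (/ a * (a * b)) by (field; auto).
  rewrite E. ring.
Qed.

Lemma node_prod_neq0 x ys : ~ In x ys -> node_prod x ys <> 0.
Proof.
  induction ys as [|y ys IH]; simpl; intros H.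
  - intros E. apply (f_equal fst) in E. simpl in E. lra.
  - apply Cmult_neq0; [apply Csub_neq0 | apply IH]; auto.
Qed.

Lemma lagrange_sum_ext xs : forall f g,
  (forall y, In y xs -> f y = g y) -> lagrange_sum xs f = lagrange_sum xs g.
Proof.
  induction xs as [|x rest IH]; intros f g H; simpl; auto.
  rewrite (H x) by (simpl; auto).
  rewrite (IH (fun y => f y / (y - x)) (fun y => g y / (y - x))); auto.
  intros y Hy; rewrite H; simpl; auto.
Qed.

Lemma lagrange_sum_linear xs : forall f g c,
  lagrange_sum xs (fun y => f y + c * g y) = lagrange_sum xs f + c * lagrange_sum xs g.
Proof.
  induction xs as [|x rest IH]; intros f g c; simpl.
  - ring.
  - rewrite (lagrange_sum_ext rest (fun y => (f y + c * g y) / (y - x))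
                 (fun y => f y / (y - x) + c * (g y / (y - x)))).
    + rewrite IH. unfold Cdiv. ring.
    + intros y _. unfold Cdiv. ring.
Qed.

Lemma lagrange_sum_mul_linear x rest g w : NoDup (x :: rest) ->
  lagrange_sum (x :: rest) (fun y => g y * (y - w))
  = lagrange_sum rest g + (x - w) * lagrange_sum (x :: rest) g.
Proof.
  intros Hnd. inversion Hnd; subst. simpl.
  rewrite (lagrange_sum_ext rest (fun y => g y * (y - w) / (y - x))
                 (fun y => g y + (x - w) * (g y / (y - x)))).
  - rewrite lagrange_sum_linear. unfold Cdiv. ring.
  - intros y Hy. assert (y - x <> 0) by (apply Csub_neq0; intros ->; auto).
    field. auto.
Qed.

Lemma lagrange_sum_one : forall rest x, NoDup (x :: rest) ->
  lagrange_sum (x :: rest) (fun _ => 1) = match rest with nil => 1 | _ => 0 end.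
Proof.
  induction rest as [|y r IH]; intros x Hnd.
  - simpl. field.
  - inversion Hnd as [|? ? Hx Hyr]; subst.
    inversion Hyr as [|? ? Hy Hr]; subst.
    assert (Hxy : x - y <> 0) by (apply Csub_neq0; intros ->; simpl in Hx; auto).
    assert (Hnd_xr : NoDup (x :: r)) by (constructor; simpl in Hx; auto).
    (* Removing the factor [y - y] kills the [y]-term: the sum over [x :: y :: r] of
       [z - y] is the sum over [x :: r] of [1]. *)
    assert (E : lagrange_sum (x :: y :: r) (fun z => 1 * (z - y))
                = lagrange_sum (x :: r) (fun _ => 1)).
    { simpl.
      assert (node_prod x r <> 0) by (apply node_prod_neq0; simpl in Hx; auto).
      rewrite (lagrange_sum_ext r (fun u => 1 * (u - y) / (u - x) / (u - y))
                                  (fun u => 1 / (u - x))).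
      - replace (1 * (y - y) / (y - x) / node_prod y r) with (RtoC 0) by (unfold Cdiv; ring).
        field. split; auto.
      - intros u Hu.
        assert (u - y <> 0) by (apply Csub_neq0; intros ->; auto).
        assert (u - x <> 0) by (apply Csub_neq0; intros ->; simpl in Hx; auto).
        field. split; auto. }
    pose proof (lagrange_sum_mul_linear x (y :: r) (fun _ => 1) y Hnd) as R.
    cbv beta in R. rewrite E, (IH x Hnd_xr), (IH y Hyr) in R.
    set (Lv := lagrange_sum (x :: y :: r) (fun _ => 1)) in *.
    set (V := match r with nil => RtoC 1 | _ => RtoC 0 end) in *.
    assert (Z : (x - y) * Lv = 0).
    { replace ((x - y) * Lv) with ((V + (x - y) * Lv) - V) by ring.
      rewrite <- R. ring. }
    replace Lv with (/ (x - y) * ((x - y) * Lv)) by (field; auto).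
    rewrite Z. ring.
Qed.

Lemma lagrange_sum_monic (w : nat -> C) : forall m xs, NoDup xs -> (m < length xs)%nat ->
  lagrange_sum xs (fun z => Cprod (fun l => z - w l) m)
  = if Nat.eqb (S m) (length xs) then 1 else 0.
Proof.
  induction m as [|m IH]; intros xs Hnd Hlen;
    (destruct xs as [|x rest]; simpl in Hlen; [lia|]).
  - simpl Cprod. rewrite lagrange_sum_one by auto.
    destruct rest; reflexivity.
  - change (lagrange_sum (x :: rest) (fun z => Cprod (fun l => z - w l) m * (z - w (S m)))
            = if Nat.eqb (S (S m)) (length (x :: rest)) then 1 else 0).
    rewrite lagrange_sum_mul_linear by auto.
    inversion Hnd; subst.
    rewrite (IH rest), (IH (x :: rest)) by (simpl; auto; lia).
    simpl length.
    destruct (Nat.eqb_spec (S m) (length rest)), (Nat.eqb_spec (S m) (S (length rest))),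
      (Nat.eqb_spec (S (S m)) (S (length rest))); try ring; lia.
Qed.

Definition node_prod_abs (x : C) (ys : list C) : R :=
  fold_right (fun y acc => Rmult (Cmod (x - y)) acc) 1%R ys.

Fixpoint lagrange_sum_abs (xs : list C) (g : C -> R) : R :=
  match xs with
  | nil => 0%R
  | x :: rest => (g x / node_prod_abs x rest
                  + lagrange_sum_abs rest (fun y => g y / Cmod (y - x)))%R
  end.

Lemma Cmod_node_prod x ys : Cmod (node_prod x ys) = node_prod_abs x ys.
Proof.
  induction ys as [|y ys IH]; simpl.
  - apply Cmod_1.
  - rewrite Cmod_mult, IH. reflexivity.
Qed.

Lemma Cmod_sub_sym (a b : C) : Cmod (a - b) = Cmod (b - a).
Proof. replace (a - b) with (- (b - a)) by ring. apply Cmod_opp. Qed.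

Lemma Cmod_gt0 (x : C) : x <> 0 -> (0 < Cmod x)%R.
Proof.
  intros H. destruct (Rle_lt_or_eq_dec _ _ (Cmod_ge_0 x)); auto.
  exfalso. apply H, Cmod_eq_0. auto.
Qed.

Lemma Cmod_div_le (a b : C) (c : R) : b <> 0 -> (Cmod a <= c)%R ->
  (Cmod (a / b) <= c / Cmod b)%R.
Proof.
  intros Hb Ha. rewrite Cmod_div by auto.
  unfold Rdiv. apply Rmult_le_compat_r; auto.
  left. apply Rinv_0_lt_compat, Cmod_gt0, Hb.
Qed.

Lemma Cmod_lagrange_sum_le xs : forall f g, NoDup xs ->
  (forall y, In y xs -> (Cmod (f y) <= g y)%R) ->
  (Cmod (lagrange_sum xs f) <= lagrange_sum_abs xs g)%R.
Proof.
  induction xs as [|x rest IH]; intros f g Hnd H; simpl.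
  - rewrite Cmod_0. lra.
  - inversion Hnd; subst.
    eapply Rle_trans; [apply Cmod_triangle | apply Rplus_le_compat].
    + rewrite <- Cmod_node_prod.
      apply Cmod_div_le; [apply node_prod_neq0; auto | apply H; simpl; auto].
    + apply IH; auto. intros y Hy.
      apply Cmod_div_le; [apply Csub_neq0; intros ->; auto | apply H; simpl; auto].
Qed.

End Lagrange.

Fixpoint sum_from (f : nat -> R) (a n : nat) : R :=
  match n with O => 0 | S n => f a + sum_from f (S a) n end.

Lemma sum_from_sum_f_R0 f : forall n a,
  sum_from f a (S n) = sum_f_R0 (fun i => f (a + i)%nat) n.
Proof.
  induction n as [|n IH]; intros a.
  - simpl. rewrite Nat.add_0_r. ring.
  - change (sum_from f a (S (S n))) with (f a + sum_from f (S a) (S n)).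
    rewrite IH, (decomp_sum _ (S n)) by lia. simpl pred.
    rewrite Nat.add_0_r. f_equal. apply sum_eq. intros i _. f_equal. lia.
Qed.

Lemma INR_fact_gt0 n : 0 < INR (fact n).
Proof. apply lt_0_INR, lt_O_fact. Qed.

Definition node_term_bound (k : nat) (d M : R) (j : nat) : R :=
  M / (d ^ k * INR (fact (j - 1)) * INR (fact (S k - j))).

Lemma sum_node_term_bound k d M : 0 < d ->
  sum_from (node_term_bound k d M) 1 (S k) = M / d ^ k * 2 ^ k / INR (fact k).
Proof.
  intros hd. rewrite sum_from_sum_f_R0.
  assert (0 < d ^ k) by (apply pow_lt; lra).
  pose proof (INR_fact_gt0 k).
  rewrite (sum_eq _ (fun i => Binomial.C k i * 1 ^ i * 1 ^ (k - i) * (M / (d ^ k * INR (fact k))))).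
  - rewrite <- scal_sum, <- Binomial.binomial.
    replace (1 + 1) with 2 by ring. field. lra.
  - intros i Hi. unfold node_term_bound, Binomial.C.
    replace (1 + i - 1)%nat with i by lia.
    replace (S k - (1 + i))%nat with (k - i)%nat by lia.
    rewrite !pow1.
    pose proof (INR_fact_gt0 i). pose proof (INR_fact_gt0 (k - i)).
    field. repeat split; lra.
Qed.

Section SeparatedNodes.
Import Complex Lagrange.

Variables (z : nat -> C) (k : nat) (d : R).
Hypothesis d_gt0 : 0 < d.
Hypothesis z_sep : forall i j, (1 <= i)%nat -> (i < j)%nat -> (j <= S k)%nat ->
  d * INR (j - i) <= Cmod (z i - z j).

Lemma nodes_NoDup : NoDup (map z (seq 1 (S k))).
Proof.
  assert (H : forall n a, (1 <= a)%nat -> (a + n <= S (S k))%nat -> NoDup (map z (seq a n))).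
  { induction n as [|n IH]; intros a Ha Hn; simpl; constructor; [|apply IH; lia].
    intros Hin. apply in_map_iff in Hin. destruct Hin as [j [Ej Hj]]. apply in_seq in Hj.
    pose proof (z_sep a j Ha ltac:(lia) ltac:(lia)) as Hsep.
    rewrite Ej in Hsep. replace (z a - z a)%C with (RtoC 0) in Hsep by ring.
    rewrite Cmod_0 in Hsep.
    assert (0 < INR (j - a)) by (apply lt_0_INR; lia). nra. }
  apply H; lia.
Qed.

Lemma node_prod_abs_rcons x l y : node_prod_abs x (l ++ y :: nil) = node_prod_abs x l * Cmod (x - y).
Proof.
  induction l as [|u l IH]; simpl.
  - ring.
  - rewrite IH. ring.
Qed.

Lemma node_prod_abs_ge a c : (1 <= a)%nat -> (a + c <= S k)%nat ->
  d ^ c * INR (fact c) <= node_prod_abs (z a) (map z (seq (S a) c)).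
Proof.
  intros Ha. induction c as [|c IH]; intros Hc.
  - simpl. lra.
  - rewrite seq_S, map_app. simpl map at 2. rewrite node_prod_abs_rcons.
    pose proof (z_sep a (S a + c) Ha ltac:(lia) ltac:(lia)) as Hsep.
    replace (S a + c - a)%nat with (S c) in Hsep by lia.
    rewrite fact_simpl, mult_INR. simpl pow.
    replace (d * d ^ c * (INR (S c) * INR (fact c)))
      with ((d ^ c * INR (fact c)) * (d * INR (S c))) by ring.
    pose proof (pos_INR (S c)). pose proof (INR_fact_gt0 c).
    assert (0 < d ^ c) by (apply pow_lt; lra).
    apply Rmult_le_compat; [nra | nra | apply IH; lia | exact Hsep].
Qed.

Variable M : R.

(* Invariant of the recursion of [lagrange_sum_abs] along the nodes [z a, z (a+1), ...]:
   after [a - 1] steps the weight of [z j] has been divided by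
   [prod_{i < a} |z j - z i| >= d^(a-1) (j-1)! / (j-a)!]. *)
Definition weight_bound (a : nat) (g : C -> R) : Prop :=
  forall j, (a <= j <= S k)%nat ->
  0 <= g (z j) <= M * INR (fact (j - a)) / (d ^ (a - 1) * INR (fact (j - 1))).

Lemma weight_bound_step a g : (1 <= a)%nat -> weight_bound a g ->
  weight_bound (S a) (fun y => g y / Cmod (y - z a)).
Proof.
  intros Ha Hg j Hj.
  destruct (Hg j ltac:(lia)) as [G0 G1].
  pose proof (z_sep a j Ha ltac:(lia) ltac:(lia)) as Hsep.
  rewrite Cmod_sub_sym in Hsep.
  replace (j - a)%nat with (S (j - S a)) in G1, Hsep by lia.
  rewrite fact_simpl, mult_INR in G1.
  replace (S a - 1)%nat with (S (a - 1)) by lia.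
  simpl pow.
  assert (0 < d ^ (a - 1)) by (apply pow_lt; lra).
  pose proof (INR_fact_gt0 (j - 1)). pose proof (INR_fact_gt0 (j - S a)).
  assert (0 < INR (S (j - S a))) by (apply lt_0_INR; lia).
  assert (Hdj : 0 < d * INR (S (j - S a))) by nra.
  split.
  - unfold Rdiv. apply Rmult_le_pos; [lra|]. left. apply Rinv_0_lt_compat. lra.
  - apply Rle_trans with ((M * (INR (S (j - S a)) * INR (fact (j - S a))) /
        (d ^ (a - 1) * INR (fact (j - 1)))) / (d * INR (S (j - S a)))).
    + unfold Rdiv. apply Rmult_le_compat; auto.
      * left. apply Rinv_0_lt_compat. lra.
      * apply Rinv_le_contravar; auto.
    + right. field. repeat split; lra.
Qed.

Lemma weight_bound_head a c g : (1 <= a)%nat -> (a + c = S k)%nat -> weight_bound a g ->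
  g (z a) / node_prod_abs (z a) (map z (seq (S a) c)) <= node_term_bound k d M a.
Proof.
  intros Ha Hac Hg.
  destruct (Hg a ltac:(lia)) as [G0 G1].
  rewrite Nat.sub_diag in G1. simpl fact in G1. simpl INR in G1.
  pose proof (node_prod_abs_ge a c Ha ltac:(lia)) as P.
  assert (0 < d ^ c) by (apply pow_lt; lra).
  assert (0 < d ^ (a - 1)) by (apply pow_lt; lra).
  pose proof (INR_fact_gt0 c). pose proof (INR_fact_gt0 (a - 1)).
  assert (Pp : 0 < d ^ c * INR (fact c)) by nra.
  unfold node_term_bound.
  replace k with ((a - 1) + c)%nat at 1 by lia.
  replace (S k - a)%nat with c by lia.
  rewrite pow_add.
  apply Rle_trans with ((M * 1 / (d ^ (a - 1) * INR (fact (a - 1)))) / (d ^ c * INR (fact c))).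
  - unfold Rdiv. apply Rmult_le_compat; auto.
    + left. apply Rinv_0_lt_compat. lra.
    + apply Rinv_le_contravar; auto.
  - right. field. repeat split; lra.
Qed.

Lemma lagrange_sum_abs_le : forall c a g, (1 <= a)%nat -> (a + c = S (S k))%nat ->
  weight_bound a g ->
  lagrange_sum_abs (map z (seq a c)) g <= sum_from (node_term_bound k d M) a c.
Proof.
  induction c as [|c IH]; intros a g Ha Hac Hg; simpl; [lra|].
  apply Rplus_le_compat.
  - apply weight_bound_head; auto. lia.
  - apply IH; [lia | lia | apply weight_bound_step; auto].
Qed.

Lemma monic_max_on_nodes_ge (w : nat -> C) :
  (forall j, (1 <= j <= S k)%nat -> Cmod (Cprod (fun l => z j - w l)%C k) <= M) ->
  d ^ k * INR (fact k) <= M * 2 ^ k.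
Proof.
  intros HM.
  set (P := fun y => Cprod (fun l => y - w l)%C k).
  assert (Hlen : length (map z (seq 1 (S k))) = S k) by now rewrite length_map, length_seq.
  assert (HL : lagrange_sum (map z (seq 1 (S k))) P = 1).
  { unfold P. rewrite lagrange_sum_monic, Hlen, Nat.eqb_refl; auto using nodes_NoDup. lia. }
  assert (Hw : weight_bound 1 (fun y => Cmod (P y))).
  { intros j Hj. split; [apply Cmod_ge_0|].
    pose proof (INR_fact_gt0 (j - 1)).
    rewrite Nat.sub_diag, pow_O.
    replace (M * INR (fact (j - 1)) / (1 * INR (fact (j - 1)))) with M by (field; lra).
    apply HM; lia. }
  pose proof (Cmod_lagrange_sum_le _ P (fun y => Cmod (P y)) nodes_NoDup
                (fun y _ => Rle_refl _)) as B1.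
  pose proof (lagrange_sum_abs_le (S k) 1 _ ltac:(lia) ltac:(lia) Hw) as B2.
  rewrite HL, Cmod_1, sum_node_term_bound in * by lra.
  assert (0 < d ^ k) by (apply pow_lt; lra).
  pose proof (INR_fact_gt0 k).
  apply Rmult_le_reg_r with (/ (d ^ k * INR (fact k))).
  - apply Rinv_0_lt_compat. nra.
  - replace (d ^ k * INR (fact k) * / (d ^ k * INR (fact k))) with 1 by (field; lra).
    replace (M * 2 ^ k * / (d ^ k * INR (fact k))) with (M / d ^ k * 2 ^ k / INR (fact k))
      by (field; lra).
    lra.
Qed.

End SeparatedNodes.

Lemma fact_sq_mul_4pow_le m : (fact m * fact m * 4 ^ m <= fact (2 * m + 2))%nat.
Proof.
  induction m as [|m IH]; [simpl; lia|].
  replace (2 * S m + 2)%nat with (S (S (2 * m + 2))) by lia.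
  rewrite !fact_simpl, Nat.pow_succ_r'.
  nia.
Qed.

Lemma fact_succ_mul_fact_mul_2pow_le m :
  (fact (S m) * fact m * 2 ^ (2 * m + 1) <= fact (2 * m + 3))%nat.
Proof.
  induction m as [|m IH]; [simpl; lia|].
  replace (2 * S m + 3)%nat with (S (S (2 * m + 3))) by lia.
  replace (2 * S m + 1)%nat with (S (S (2 * m + 1))) by lia.
  rewrite (fact_simpl (S m)), (fact_simpl (S (2 * m + 3))), (fact_simpl (2 * m + 3)).
  pose proof (fact_simpl m) as Hm.
  rewrite !Nat.pow_succ_r'.
  set (A := fact (S m)) in *. set (B := fact m) in *.
  set (P := 2 ^ (2 * m + 1)) in *. set (F := fact (2 * m + 3)) in *.
  rewrite Hm at 2.
  nia.
Qed.

(* [xi k] is not sharp here: the divided-difference argument gives [k! / 2^k]. *)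
Lemma xi_mul_pow2_le_fact k : (1 <= k)%nat -> xi k * 2 ^ k <= INR (fact k).
Proof.
  intros hk. unfold xi.
  destruct (Nat.eqb_spec k 1) as [->|Hk1]; [simpl; lra|].
  destruct (Nat.Even_or_Odd k) as [[m ->]|[m ->]].
  - rewrite Nat.even_even. destruct m as [|m]; [lia|].
    replace (2 * S m - 2)%nat with (m * 2)%nat by lia. rewrite Nat.div_mul by lia.
    pose proof (le_INR _ _ (fact_sq_mul_4pow_le m)) as H.
    rewrite !mult_INR, pow_INR in H.
    replace (2 * m + 2)%nat with (2 * S m)%nat in H by lia.
    replace (INR 4) with 4 in H by (simpl; ring).
    replace (2 ^ (2 * S m)) with (4 * 4 ^ m) 
      by (rewrite pow_mult; replace (2 ^ 2) with 4 by ring; reflexivity).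
    lra.
  - rewrite Nat.even_odd. destruct m as [|m]; [lia|].
    replace (2 * S m + 1 - 1)%nat with (S m * 2)%nat by lia.
    replace (2 * S m + 1 - 3)%nat with (m * 2)%nat by lia.
    rewrite !Nat.div_mul by lia.
    pose proof (le_INR _ _ (fact_succ_mul_fact_mul_2pow_le m)) as H.
    rewrite !mult_INR, pow_INR in H.
    replace (2 * m + 3)%nat with (2 * S m + 1)%nat in H by lia.
    replace (INR 2) with 2 in H by (simpl; ring).
    replace (2 ^ (2 * S m + 1)) with (4 * 2 ^ (2 * m + 1))
      by (replace (2 * S m + 1)%nat with (2 + (2 * m + 1))%nat by lia;
          rewrite (pow_add 2 2); replace (2 ^ 2) with 4 by ring; reflexivity).
    lra.
Qed.

Section Angles.
Variables (k : nat) (theta : nat -> R) (theta_min : R).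
Hypothesis theta_min_ge0 : 0 <= theta_min.
Hypothesis hlo : - (PI / 2) <= theta 1%nat.
Hypothesis hhi : theta (S k) <= PI / 2.
Hypothesis hinc : forall j : nat, (1 <= j <= k)%nat -> theta j < theta (S j).
Hypothesis hmin_lower : forall p j : nat,
  (1 <= p <= S k)%nat -> (1 <= j <= S k)%nat -> p <> j ->
  theta_min <= Rabs (theta p - theta j).

Lemma theta_gap_ge t i : (1 <= i)%nat -> (i + t <= S k)%nat ->
  INR t * theta_min <= theta (i + t)%nat - theta i.
Proof.
  induction t as [|t IH]; intros Hi Ht.
  - rewrite Nat.add_0_r. simpl. lra.
  - specialize (IH Hi ltac:(lia)).
    pose proof (hmin_lower (i + S t) (i + t) ltac:(lia) ltac:(lia) ltac:(lia)) as Hmin.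
    replace (i + S t)%nat with (S (i + t)) in * by lia.
    pose proof (hinc (i + t) ltac:(lia)).
    rewrite Rabs_right in Hmin by lra.
    rewrite S_INR. lra.
Qed.

Lemma expi_theta_separated i j : (1 <= i)%nat -> (i < j)%nat -> (j <= S k)%nat ->
  2 * theta_min / PI * INR (j - i)
  <= Complex.Cmod (Complex.Cminus (expi (theta i)) (expi (theta j))).
Proof.
  intros Hi Hij Hj.
  pose proof PI_RGT_0.
  pose proof (theta_gap_ge (j - i) i Hi ltac:(lia)) as Gij.
  pose proof (theta_gap_ge (i - 1) 1 ltac:(lia) ltac:(lia)) as G1i.
  pose proof (theta_gap_ge (S k - j) j ltac:(lia) ltac:(lia)) as Gjk.
  replace (i + (j - i))%nat with j in Gij by lia.
  replace (1 + (i - 1))%nat with i in G1i by lia.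
  replace (j + (S k - j))%nat with (S k) in Gjk by lia.
  pose proof (pos_INR (i - 1)). pose proof (pos_INR (S k - j)). pose proof (pos_INR (j - i)).
  assert (Hspan : 0 <= theta j - theta i <= PI) by nra.
  rewrite Lagrange.Cmod_sub_sym.
  eapply Rle_trans; [|apply (expi_chord_ge _ _ Hspan)].
  replace (2 * theta_min / PI * INR (j - i)) with (2 * (INR (j - i) * theta_min) / PI)
    by (field; lra).
  unfold Rdiv. apply Rmult_le_compat_r; [left; apply Rinv_0_lt_compat|]; lra.
Qed.

End Angles.

Lemma norm_inf_ge p v j : (1 <= j <= p)%nat -> Rabs (v j) <= norm_inf p v.
Proof.
  intros Hj. unfold norm_inf.
  assert (Hin : In (Rabs (v j)) (map (fun j => Rabs (v j)) (seq 1 p)))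
    by (apply in_map_iff; exists j; split; auto; apply in_seq; lia).
  induction (map (fun j => Rabs (v j)) (seq 1 p)) as [|y l IH]; simpl in *; [tauto|].
  destruct Hin as [->|Hin]; [apply Rmax_l|].
  eapply Rle_trans; [apply IH, Hin | apply Rmax_r].
Qed.

Lemma norm_inf_ge0 p v : 0 <= norm_inf p v.
Proof.
  unfold norm_inf. induction (map (fun j => Rabs (v j)) (seq 1 p)) as [|y l IH]; simpl; [lra|].
  eapply Rle_trans; [apply IH | apply Rmax_r].
Qed.

Lemma eta_Cprod p q z zh j :
  eta p q z zh j = Complex.Cmod (Lagrange.Cprod (fun l => Complex.Cminus (z j) (zh l)) q).
Proof.
  unfold eta. induction q as [|q IH]; simpl.
  - now rewrite Complex.Cmod_1.
  - now rewrite Complex.Cmod_mult, IH.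
Qed.

Theorem corollary3p1 (k : nat) (hk : (1 <= k)%nat)
  (theta : nat -> R) (theta_hat : nat -> R) (theta_min : R)
  (hlo : - (PI / 2) <= theta 1%nat)
  (hhi : theta (S k) <= PI / 2)
  (hinc : forall j : nat, (1 <= j <= k)%nat -> theta j < theta (S j))
  (hmin_attained : exists p j : nat,
      (1 <= p <= S k)%nat /\ (1 <= j <= S k)%nat /\ p <> j /\
      theta_min = Rabs (theta p - theta j))
  (hmin_lower : forall p j : nat,
      (1 <= p <= S k)%nat -> (1 <= j <= S k)%nat -> p <> j ->
      theta_min <= Rabs (theta p - theta j)) :
  norm_inf (S k)
    (eta (S k) k (fun j => expi (theta j)) (fun l => expi (theta_hat l)))
  >= xi k * (2 * theta_min / PI) ^ k.
Proof.
  pose proof PI_RGT_0.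
  assert (Htm : 0 <= theta_min)
    by (destruct hmin_attained as (p & j & _ & _ & _ & ->); apply Rabs_pos).
  destruct (Req_dec theta_min 0) as [Hz|Hnz].
  { rewrite Hz. replace (2 * 0 / PI) with 0 by (field; lra).
    rewrite pow_i by lia. pose proof (norm_inf_ge0 (S k) (eta (S k) k
      (fun j => expi (theta j)) (fun l => expi (theta_hat l)))). lra. }
  set (M := norm_inf _ _).
  set (d := 2 * theta_min / PI).
  assert (Hd : 0 < d) by (apply Rdiv_lt_0_compat; lra).
  assert (HM : d ^ k * INR (fact k) <= M * 2 ^ k).
  { apply (monic_max_on_nodes_ge (fun j => expi (theta j)) k d Hd
             (expi_theta_separated k theta theta_min Htm hlo hhi hinc hmin_lower)
             M (fun l => expi (theta_hat l))).
    intros j Hj.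
    rewrite <- (eta_Cprod (S k) k (fun j => expi (theta j)) (fun l => expi (theta_hat l))).
    eapply Rle_trans; [apply Rle_abs|].
    now apply norm_inf_ge. }
  pose proof (xi_mul_pow2_le_fact k hk).
  assert (0 < d ^ k) by (apply pow_lt; lra).
  assert (0 < 2 ^ k) by (apply pow_lt; lra).
  apply Rle_ge, Rmult_le_reg_r with (2 ^ k); [lra|].
  nra.
Qed.
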